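(* Let $(V_1\xrightarrow{\mathrm d}V_0,F_1,F_2)$ be a unital 2-term representation up to homotopy of a Lie group $G$ such that $F_1$ is an (associative) action, i.e. $F_1(g_1g_2)=F_1(g_1)F_1(g_2)$. Let $G\ltimes V_0$ be the semidirect product group $(g_1,\xi_1)(g_2,\xi_2)=(g_1g_2,\xi_1+F_1(g_1)\xi_2)$, acting on $V_1$ by $\widetilde F_1(g,\xi)(m)=F_1(g)(m)$. Define $\widetilde F_2:(G\ltimes V_0)^3\to V_1$ by $\widetilde F_2((g_1,\xi_1),(g_2,\xi_2),(g_3,\xi_3))=F_2(g_1,g_2)(\xi_3)$. Then $\widetilde F_2$ is a smooth group 3-cocycle, representing an element of $H^3_{sm}(G\ltimes V_0,V_1)$.
   Context: A unital 2-term representation up to homotopy of a Lie group $G$ consists of: a 2-term complex of vector spaces $V_1\xrightarrow{\mathrm d}V_0$; a smooth map $F_1$ assigning to each $g\in G$ linear maps $F_1(g)$ on $V_0$ and on $V_1$ (not necessarily multiplicative) with $\mathrm dF_1(g)=F_1(g)\mathrm d$ and $F_1(1_G)=\mathrm{Id}$; and a smooth map $F_2:G\times G\to\mathrm{Hom}(V_0,V_1)$ with $F_1(g_1)F_1(g_2)-F_1(g_1g_2)=[\mathrm d,F_2(g_1,g_2)]$ (i.e. equal to $\mathrm d\circ F_2(g_1,g_2)$ on $V_0$ and $F_2(g_1,g_2)\circ\mathrm d$ on $V_1$) and $F_1(g_1)\circ F_2(g_2,g_3)-F_2(g_1g_2,g_3)+F_2(g_1,g_2g_3)-F_2(g_1,g_2)\circ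 F_1(g_3)=0$. $H^\bullet_{sm}(K,N)$ denotes group cohomology of a Lie group $K$ with values in a module $N$ computed with smooth cochains $K^{\times n}\to N$ and the usual group-cohomology differential. *)

From HB Require Import structures.
From mathcomp Require Import all_boot all_order all_algebra.
Set Implicit Arguments. Unset Strict Implicit. Unset Printing Implicit Defensive.
Import GRing.Theory.
Local Open Scope ring_scope.

Definition is_group (G : Type) (mul : G -> G -> G) (one : G) (inv : G -> G) : Prop :=
  [/\ forall a b c, mul a (mul b c) = mul (mul a b) c,
      forall a, mul one a = a, forall a, mul a one = a,
      forall a, mul (inv a) a = one & forall a, mul a (inv a) = one].

Definition sd_mul (K : fieldType) (G : Type) (V0 : lmodType K)
  (mul : G -> G -> G) (F10 : G -> {linear V0 -> V0}) (x y : G * V0) : G * V0 :=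
  (mul x.1 y.1, x.2 + F10 x.1 y.2).

Definition is_group_3cocycle (K : fieldType) (H : Type) (N : lmodType K)
  (hmul : H -> H -> H) (act : H -> N -> N) (c : H -> H -> H -> N) : Prop :=
  forall x1 x2 x3 x4 : H,
    act x1 (c x2 x3 x4) - c (hmul x1 x2) x3 x4 + c x1 (hmul x2 x3) x4
    - c x1 x2 (hmul x3 x4) + c x1 x2 x3 = 0.

From HB Require Import structures.
From mathcomp Require Import all_boot all_order all_algebra.
Import GRing.Theory.
Local Open Scope ring_scope.

(* In the coboundary of
   F2~ at (g1,x1),...,(g4,x4), the only V0-argument that is not x4 itself is
   the V0-component x3 + F1(g3) x4 of (g3,x3)(g4,x4), fed to F2(g1,g2); by
   linearity the x3 part cancels against the last term, and what remains is
   the coherence identity for (g1,g2,g3) evaluated at x4. *)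

Section SemidirectCocycle.

Variables (K : fieldType) (G : Type) (mul : G -> G -> G).
Variables (V0 V1 : lmodType K).
Variables (F10 : G -> {linear V0 -> V0}) (F11 : G -> {linear V1 -> V1}).
Variable F2 : G -> G -> {linear V0 -> V1}.

Hypothesis F2_coherence : forall g1 g2 g3 v,
  F11 g1 (F2 g2 g3 v) - F2 (mul g1 g2) g3 v + F2 g1 (mul g2 g3) v
  - F2 g1 g2 (F10 g3 v) = 0.

Lemma sd_pullback_F2_cocycle :
  is_group_3cocycle (sd_mul mul F10)
    (fun (x : G * V0) (m : V1) => F11 x.1 m)
    (fun x y z : G * V0 => F2 x.1 y.1 z.2).
Proof.
move=> [g1 x1] [g2 x2] [g3 x3] [g4 x4] /=.
rewrite /sd_mul /= linearD /= -[RHS](F2_coherence g1 g2 g3 x4).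
by rewrite opprD addrA addrAC addrNK.
Qed.

End SemidirectCocycle.

Theorem mainTheorem7 (K : fieldType) (G : Type)
  (mul : G -> G -> G) (one : G) (inv : G -> G)
  (V0 V1 : lmodType K) (d : {linear V1 -> V0})
  (F10 : G -> {linear V0 -> V0}) (F11 : G -> {linear V1 -> V1})
  (F2 : G -> G -> {linear V0 -> V1}) :
  is_group mul one inv ->
  (* d F1(g) = F1(g) d *)
  (forall g m, d (F11 g m) = F10 g (d m)) ->
  (* unitality *)
  (forall v, F10 one v = v) -> (forall m, F11 one m = m) ->
  (* F1(g1)F1(g2) - F1(g1g2) = [d, F2(g1,g2)] *)
  (forall g1 g2 v, F10 g1 (F10 g2 v) - F10 (mul g1 g2) v = d (F2 g1 g2 v)) ->
  (forall g1 g2 m, F11 g1 (F11 g2 m) - F11 (mul g1 g2) m = F2 g1 g2 (d m)) ->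
  (* coherence of F2 *)
  (forall g1 g2 g3 v,
      F11 g1 (F2 g2 g3 v) - F2 (mul g1 g2) g3 v + F2 g1 (mul g2 g3) v
      - F2 g1 g2 (F10 g3 v) = 0) ->
  (* F1 is an associative action *)
  (forall g1 g2 v, F10 (mul g1 g2) v = F10 g1 (F10 g2 v)) ->
  (forall g1 g2 m, F11 (mul g1 g2) m = F11 g1 (F11 g2 m)) ->
  is_group_3cocycle (sd_mul mul F10)
    (fun (x : G * V0) (m : V1) => F11 x.1 m)
    (fun x y z : G * V0 => F2 x.1 y.1 z.2).
Proof.
move=> _ _ _ _ _ _ coherence _ _.
exact: sd_pullback_F2_cocycle.
Qed.
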